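(* Let $G$ be an interval graph and let $[C_1,\ldots,C_t]$ be a consecutive clique arrangement of $G$ with $|C_1|\ge 3$. For a vertex $v$ let $r(v)=\max\{i : v\in C_i\}$, order the vertices of $C_1$ by nondecreasing $r(v)$, and let $\alpha,\beta,\gamma$ be the first three vertices of $C_1$ in this ordering. If $\mathcal{P}$ is a triangle packing of $G$ in which $\alpha$ is covered by a triangle, then there is a triangle packing $\mathcal{P}'$ of $G$ with $|\mathcal{P}'|=|\mathcal{P}|$ such that $\{\alpha,\beta,\gamma\}$ is one of the triangles of $\mathcal{P}'$.
   Context: A graph is an interval graph if it is the intersection graph of a finite collection of intervals on the real line. A consecutive clique arrangement of a graph $G$ is a linear ordering $[C_1,\ldots,C_t]$ of all maximal cliques of $G$ such that for each vertex $v$, the cliques containing $v$ are consecutive in the ordering. A triangle packing is a collection of pairwise vertex-disjoint triangles. *)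

From HB Require Import structures.
From mathcomp Require Import all_boot all_order all_algebra.
Set Implicit Arguments. Unset Strict Implicit. Unset Printing Implicit Defensive.
Import Order.TTheory GRing.Theory Num.Theory.

Definition simple_graph (T : finType) (e : rel T) : Prop :=
  symmetric e /\ irreflexive e.

Definition interval_graph (T : finType) (e : rel T) : Prop :=
  exists lo hi : T -> rat,
    (forall v, (lo v <= hi v)%R) /\
    (forall u v, u != v -> e u v = ((lo u <= hi v)%R && (lo v <= hi u)%R)).

Definition is_clique (T : finType) (e : rel T) (Q : {set T}) : bool :=
  [forall u in Q, forall v in Q, (u != v) ==> e u v].

Definition maximal_clique (T : finType) (e : rel T) (Q : {set T}) : bool :=
  is_clique e Q && [forall Q' : {set T}, (Q \proper Q') ==> ~~ is_clique e Q'].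

(* [C_1, ..., C_t] is represented by s with C_(i+1) = nth set0 s i. *)
Definition consecutive_clique_arrangement (T : finType) (e : rel T)
    (s : seq {set T}) : Prop :=
  uniq s /\
  (forall Q : {set T}, (Q \in s) = maximal_clique e Q) /\
  (forall (v : T) (i j k : nat), (i <= j <= k)%N -> (k < size s)%N ->
     v \in nth set0 s i -> v \in nth set0 s k -> v \in nth set0 s j).

(* r(v) = max index of a clique containing v (0-based). *)
Definition rlast (T : finType) (s : seq {set T}) (v : T) : nat :=
  (\max_(i < size s | v \in nth set0 s i) (i : nat))%N.

Definition is_triangle (T : finType) (e : rel T) (X : {set T}) : bool :=
  (#|X| == 3%N) && is_clique e X.

Definition triangle_packing (T : finType) (e : rel T) (P : {set {set T}}) : Prop :=
  (forall X, X \in P -> is_triangle e X) /\ trivIset P.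

From HB Require Import structures.
From mathcomp Require Import all_boot all_order all_algebra perm.

(* Cliques are indexed from 1 as in the paper (C0 in the code is C_1).
   If w is in C_1 and r(v) <= r(w), then every neighbour u <> w of v is a
   neighbour of w: the edge vu lies in a maximal clique C_i with i <= r(v), and
   w, lying in C_1 and C_r(w), lies in C_i. The vertex alpha minimising r on C_1
   has r(alpha) = 1, as otherwise C_1 would be contained in C_2; hence N(alpha)
   is inside C_1 and so is the triangle of P through alpha. Choose a vertex z of
   that triangle outside {alpha, gamma} and swap z with beta in every triangle
   of P: the result is again a packing, since beta is adjacent to the rest of
   the triangle (C_1 is a clique) and every other neighbour of beta is a
   neighbour of z. A second swap brings in gamma. *)

Set Implicit Arguments.
Unset Strict Implicit.
Unset Printing Implicit Defensive.

Section Cliques.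

Variables (T : finType) (e : rel T).

Lemma is_cliqueP (Q : {set T}) :
  reflect {in Q &, forall u v, u != v -> e u v} (is_clique e Q).
Proof.
apply: (iffP forall_inP) => [cl u v uQ vQ uv | cl u uQ].
  by have /forall_inP/(_ v vQ)/implyP := cl u uQ; apply.
by apply/forall_inP => v vQ; apply/implyP; apply: cl.
Qed.

Lemma maximal_cliqueE (Q : {set T}) :
  maximal_clique e Q = maxset [pred X | is_clique e X] Q.
Proof.
apply/andP/maxsetP => [[clQ /forallP maxQ] | [clQ supQ]]; split=> //.
  move=> X clX QX; apply/eqP; rewrite eqEsubset QX andbT; apply: contraTT clX => XQ.
  by have /implyP := maxQ X; apply; rewrite properE QX.
apply/forallP => X; apply/implyP; rewrite properE => /andP[QX XQ].
by apply: contra XQ => clX; rewrite (supQ X clX QX).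
Qed.

Lemma edge_in_maximal_clique u v :
  symmetric e -> e u v -> exists2 Q, maximal_clique e Q & (u \in Q) && (v \in Q).
Proof.
move=> esym euv.
have cl_uv : is_clique e [set u; v].
  by apply/is_cliqueP => x y /set2P[]-> /set2P[]->; rewrite ?eqxx // esym.
have [Q maxQ uvQ] := maxset_exists cl_uv.
exists Q; first by rewrite maximal_cliqueE.
by rewrite !(subsetP uvQ) ?set21 ?set22.
Qed.

Lemma is_clique_tperm (X : {set T}) a b :
  symmetric e -> is_clique e X ->
  (a \in X -> {in X, forall u, u != a -> u != b -> e b u}) ->
  (b \in X -> {in X, forall u, u != a -> u != b -> e a u}) ->
  is_clique e (tperm a b @: X).
Proof.
move=> esym /is_cliqueP clX Ha Hb.
apply/is_cliqueP => _ _ /imsetP[u uX ->] /imsetP[v vX ->] fuv.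
have uv : u != v by apply: contraNneq fuv => ->.
move: uX vX uv; case: tpermP => [->|->|/eqP ua /eqP ub];
  case: tpermP => [->|->|/eqP va /eqP vb] uX vX uv //; rewrite ?eqxx // in uv.
- by rewrite esym; apply: clX.
- exact: (Ha uX).
- by rewrite esym; apply: clX.
- exact: (Hb uX).
- by rewrite esym; apply: Ha; rewrite // eq_sym.
- by rewrite esym; apply: Hb; rewrite // eq_sym.
- exact: clX.
Qed.

Lemma triangle_packing_tperm (P : {set {set T}}) X0 a b :
  symmetric e -> triangle_packing e P -> X0 \in P -> a \in X0 ->
  {in X0, forall u, u != a -> u != b -> e b u} ->
  (forall u, e b u -> u != a -> e a u) ->
  triangle_packing e [set tperm a b @: X | X : {set T} in P].
Proof.
move=> esym [Ptri Ptriv] X0P aX0 NbX0 Nba.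
split; last by rewrite imset_trivIset //; apply: perm_inj.
move=> _ /imsetP[X XP ->]; have /andP[/eqP X3 clX] := Ptri X XP.
rewrite /is_triangle card_imset ?X3 /=; last exact: perm_inj.
apply: is_clique_tperm => // [aX | bX u uX ua ub].
  case: (eqVneq X X0) => [-> // | XX0].
  by have /disjointFr/(_ aX) := trivIsetP Ptriv X X0 XP X0P XX0; rewrite aX0.
by apply: Nba => //; apply: (is_cliqueP _ clX); rewrite // eq_sym.
Qed.

Lemma triangle_packing_exchange (P : {set {set T}}) X z b :
  symmetric e -> triangle_packing e P -> X \in P -> z \in X -> b \notin X ->
  {in X, forall u, u != z -> e b u} -> (forall u, e b u -> u != z -> e z u) ->
  exists P', [/\ triangle_packing e P', #|P'| = #|P| & b |: (X :\ z) \in P'].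
Proof.
move=> esym Ppk XP zX bX NbX Nbz; exists [set tperm z b @: Y | Y : {set T} in P]; split.
- by apply: (triangle_packing_tperm (X0 := X)) => // u uX uz _; apply: NbX.
- by rewrite card_imset //; apply/imset_inj/perm_inj.
suff -> : b |: (X :\ z) = tperm z b @: X by apply/imsetP; exists X.
have zb : z != b by apply: contraNneq bX => <-.
apply/setP => u; rewrite -{2}(tpermK z b u) mem_imset ?inE; last exact: perm_inj.
case: tpermP => [->|->|/eqP uz /eqP ub]; first by rewrite (negPf zb) eqxx (negPf bX).
  by rewrite eqxx.
by rewrite (negPf ub) uz.
Qed.

End Cliques.

Lemma card_gt2_avoid (T : finType) (X : {set T}) x y :
  2 < #|X| -> exists2 z, z \in X & z \notin [set x; y].
Proof.
move=> X_gt2; have : 0 < #|X :\: [set x; y]|.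
  rewrite cardsD subn_gt0 (leq_ltn_trans _ X_gt2) //.
  by rewrite (leq_trans (subset_leq_card (subsetIr X _))) // cards2 ltnS leq_b1.
by case/card_gt0P => z; rewrite inE => /andP[zxy zX]; exists z.
Qed.

Section CliqueArrangement.

Variables (T : finType) (e : rel T) (s : seq {set T}).

Local Notation C0 := (nth set0 s 0).

Lemma mem_nth_size v i : v \in nth set0 s i -> i < size s.
Proof. by apply: contraTT; rewrite -leqNgt => /(nth_default set0) ->; rewrite inE. Qed.

Lemma rlast_ge v i : v \in nth set0 s i -> i <= rlast s v.
Proof.
by move=> vi; rewrite /rlast (bigmax_sup (Ordinal (mem_nth_size vi))).
Qed.

Lemma mem_nth_rlast v i : v \in nth set0 s i -> v \in nth set0 s (rlast s v).
Proof.
move=> vi; rewrite /rlast (bigmax_eq_arg (Ordinal (mem_nth_size vi))) //.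
by case: arg_maxnP.
Qed.

Hypothesis e_sym : symmetric e.
Hypothesis s_uniq : uniq s.
Hypothesis s_maximal : forall Q : {set T}, (Q \in s) = maximal_clique e Q.
Hypothesis s_consecutive : forall v i j k, i <= j <= k -> k < size s ->
  v \in nth set0 s i -> v \in nth set0 s k -> v \in nth set0 s j.

Lemma maximal_clique_nth i : i < size s -> maximal_clique e (nth set0 s i).
Proof. by move=> ilt; rewrite -s_maximal mem_nth. Qed.

Lemma edge_in_arrangement u v :
  e u v -> exists i, (u \in nth set0 s i) && (v \in nth set0 s i).
Proof.
move=> euv; have [Q maxQ uvQ] := edge_in_maximal_clique e_sym euv.
by exists (index Q s); rewrite nth_index // s_maximal.
Qed.

Lemma rlast_dominates v w u :
  w \in C0 -> rlast s v <= rlast s w -> e v u -> u != w -> e w u.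
Proof.
move=> wC0 rvw evu uw; have [i /andP[vi ui]] := edge_in_arrangement evu.
have wr := mem_nth_rlast wC0.
have wi : w \in nth set0 s i.
  apply: (@s_consecutive w 0 i (rlast s w)) => //; last exact: mem_nth_size wr.
  exact: leq_trans (rlast_ge vi) rvw.
have /andP[/is_cliqueP cl _] := maximal_clique_nth (mem_nth_size vi).
by apply: cl; rewrite // eq_sym.
Qed.

Lemma rlast_min_eq0 w :
  w \in C0 -> {in C0, forall v, rlast s w <= rlast s v} -> rlast s w = 0.
Proof.
move=> wC0 wmin; apply/eqP; rewrite -leqn0 leqNgt; apply/negP => rw_gt0.
have s1 : 1 < size s := leq_ltn_trans rw_gt0 (mem_nth_size (mem_nth_rlast wC0)).
have C0sub : C0 \subset nth set0 s 1.
  apply/subsetP => v vC0; have vr := mem_nth_rlast vC0.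
  apply: (@s_consecutive v 0 1 (rlast s v)) => //; last exact: mem_nth_size vr.
  exact: leq_trans rw_gt0 (wmin v vC0).
have /andP[cl1 _] := maximal_clique_nth s1.
have : nth set0 s 1 = C0.
  by apply: maxsetsup cl1 C0sub; rewrite -maximal_cliqueE maximal_clique_nth // ltnW.
by move/eqP; rewrite nth_uniq // ltnW.
Qed.

Lemma neighbor_rlast0 v u : rlast s v = 0 -> e v u -> u \in C0.
Proof.
move=> rv0 evu; have [i /andP[vi ui]] := edge_in_arrangement evu.
by move: (rlast_ge vi); rewrite rv0 leqn0 => /eqP i0; rewrite -i0.
Qed.

Lemma triangle_sub_first_clique X v :
  v \in C0 -> rlast s v = 0 -> is_triangle e X -> v \in X -> X \subset C0.
Proof.
move=> vC0 rv0 /andP[_ /is_cliqueP clX] vX; apply/subsetP => u uX.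
have [-> // | uv] := eqVneq u v.
by apply: (neighbor_rlast0 rv0); apply: clX; rewrite // eq_sym.
Qed.

Lemma first_clique_exchange (P : {set {set T}}) X z b :
  triangle_packing e P -> X \in P -> X \subset C0 -> z \in X ->
  b \in C0 -> b \notin X -> rlast s b <= rlast s z ->
  exists P', [/\ triangle_packing e P', #|P'| = #|P| & b |: (X :\ z) \in P'].
Proof.
move=> Ppk XP XC0 zX bC0 bX rbz.
have /andP[/is_cliqueP clC0 _] := maximal_clique_nth (mem_nth_size bC0).
apply: triangle_packing_exchange => // [u uX _ | u ebu uz].
  by apply: (clC0 b u bC0 (subsetP XC0 u uX)); apply: contraNneq bX => ->.
exact: rlast_dominates (subsetP XC0 z zX) rbz ebu uz.
Qed.

Lemma packing_grow_triangle (P : {set {set T}}) X a b y :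
  a \in C0 -> rlast s a = 0 -> triangle_packing e P -> X \in P -> a \in X ->
  b \in C0 -> {in C0, forall z, z != a -> z != y -> z != b -> rlast s b <= rlast s z} ->
  exists P', [/\ triangle_packing e P', #|P'| = #|P| &
    exists2 X', X' \in P' & [/\ a \in X', b \in X' & y \in X -> y \in X']].
Proof.
move=> aC0 ra0 Ppk XP aX bC0 rb.
have [bX | bX] := boolP (b \in X); first by exists P; split=> //; exists X.
have /andP[/eqP X3 _] := Ppk.1 X XP.
have XC0 := triangle_sub_first_clique aC0 ra0 (Ppk.1 X XP) aX.
have [z zX] := @card_gt2_avoid _ X a y (eq_leq (esym X3)).
rewrite !inE negb_or => /andP[za zy].
have zb : z != b by apply: contraNneq bX => <-.
have [P' [P'pk P'card X'P']] :=
  first_clique_exchange Ppk XP XC0 zX bC0 bX (rb z (subsetP XC0 z zX) za zy zb).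
exists P'; split=> //; exists (b |: (X :\ z)) => //.
split=> [|| yX]; rewrite !inE ?eqxx // ?aX ?yX andbT.
  by rewrite [a == z]eq_sym za orbT.
by rewrite [y == z]eq_sym zy orbT.
Qed.

End CliqueArrangement.

Theorem mainTheorem4 (T : finType) (e : rel T) (s : seq {set T})
    (alpha beta gamma : T) (P : {set {set T}}) :
  simple_graph e ->
  interval_graph e ->
  consecutive_clique_arrangement e s ->
  (3 <= #|nth set0 s 0|)%N ->
  alpha \in nth set0 s 0 -> beta \in nth set0 s 0 -> gamma \in nth set0 s 0 ->
  alpha != beta -> alpha != gamma -> beta != gamma ->
  (rlast s alpha <= rlast s beta)%N ->
  (rlast s beta <= rlast s gamma)%N ->
  (forall w, w \in nth set0 s 0 -> w \notin [set alpha; beta; gamma] ->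
     (rlast s gamma <= rlast s w)%N) ->
  triangle_packing e P ->
  (exists2 X, X \in P & alpha \in X) ->
  exists P' : {set {set T}},
    [/\ triangle_packing e P', #|P'| = #|P| & [set alpha; beta; gamma] \in P'].
Proof.
move=> [e_sym _] _ [s_uniq [s_max s_cons]] _ aC bC cC ab ac bc rab rbc rC Ppk [X0 X0P aX0].
have rC' z : z \in nth set0 s 0 -> z != alpha -> z != beta -> z != gamma ->
    rlast s gamma <= rlast s z.
  by move=> zC za zb zc; apply: rC; rewrite // !inE !negb_or za zb zc.
have ra0 : rlast s alpha = 0.
  apply: (rlast_min_eq0 s_uniq s_max s_cons aC) => v vC.
  have [va | va] := eqVneq v alpha; first by rewrite va.
  have [vb | vb] := eqVneq v beta; first by rewrite vb.
  have [vc | vc] := eqVneq v gamma; first by rewrite vc (leq_trans rab).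
  by rewrite (leq_trans rab) // (leq_trans rbc) // rC'.
have [P1 [pk1 card1 [X1 X1P1 [aX1 bX1 _]]]] :=
  packing_grow_triangle e_sym s_max s_cons (y := gamma) aC ra0 Ppk X0P aX0 bC
    (fun z zC za zc zb => leq_trans rbc (rC' z zC za zb zc)).
have [P2 [pk2 card2 [X2 X2P2 [aX2 cX2 /(_ bX1) bX2]]]] :=
  packing_grow_triangle e_sym s_max s_cons (y := beta) aC ra0 pk1 X1P1 aX1 cC
    rC'.
exists P2; split; rewrite ?card2 //.
suff -> : [set alpha; beta; gamma] = X2 by [].
have /andP[/eqP X2_3 _] := pk2.1 X2 X2P2.
have abc3 : #|[set alpha; beta; gamma]| = 3.
  by rewrite -setUA cardsU1 cards2 !inE negb_or ab ac bc.
apply/eqP; rewrite eqEcard X2_3 abc3 leqnn andbT.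
by apply/subsetP => v; rewrite !inE => /orP[/orP[]|] /eqP ->.
Qed.
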